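(* Let $l\ge1$ and $n\ge4l+2$. For any equilateral $(2l+1)$-pointed star $S$ inscribed in $P_n$, the number of points of $S$ that are vertices of $P_n$ or midpoints of edges of $P_n$ is either $0$ or $\gcd(n,2l+1)$.
   Context: $P_n$ is the boundary of the regular polygon in $\mathbb{R}^2$ with vertices the $n$-th roots of unity, Euclidean metric $\|x-y\|$. $d_{P_n}(x,y)\in[0,1)$ is the counterclockwise arc length of $P_n$ from $x$ to $y$ divided by the perimeter. The directed Vietoris–Rips graph $\mathrm{VR}_<(P_n;r)$ has vertex set $P_n$ and, for distinct $u,w$ with $\|u-w\|<r$, the edge $u\to w$ if $d_{P_n}(u,w)<d_{P_n}(w,u)$, else $w\to u$; it is cyclic if whenever $u_0\to u_1$, every $w$ strictly counterclockwise-between them has $u_0\to w$ and $w\to u_1$. $r_n=\sup\{r\ge0:\mathrm{VR}_<(P_n;r')\text{ cyclic for all }0<r'<r\}$. For $0<r<r_n$, $g_r(p)$ is the first point $w$ met moving counterclockwise from $p$ with $\|p-w\|=r$, and $g_{r_n}=\lim_{r\to r_n}g_r$. An equilateral $(2l+1)$-pointed star of side $r\in(0,r_n]$ inscribed in $P_n$ is a cyclic sequence $u_0,\dots,u_{2l}$ with $u_{i+1}=g_r(u_i)$ (indices mod $2l+1$) and $\sum_i d_{P_n}(u_i,u_{i+1})=l$. *)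

From Stdlib Require Import Reals Lra Lia List.
Open Scope R_scope.

Definition floorR (x : R) : Z := (up x - 1)%Z.
Definition frac (x : R) : R := x - IZR (floorR x).

Definition vert (n : nat) (k : R) : R * R :=
  (cos (2 * PI * k / INR n), sin (2 * PI * k / INR n)).

(* Arc-length parametrisation of P_n by t (period 1, t = fraction of the
   perimeter travelled counterclockwise from vertex 0). *)
Definition pt (n : nat) (t : R) : R * R :=
  let m := INR n * t in
  let k := IZR (floorR m) in
  let s := m - k in
  ((1 - s) * fst (vert n k) + s * fst (vert n (k + 1)),
   (1 - s) * snd (vert n k) + s * snd (vert n (k + 1))).

Definition edist (p q : R * R) : R :=
  sqrt ((fst p - fst q) ^ 2 + (snd p - snd q) ^ 2).

(* points of P_n are represented by their parameters in [0,1) *)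
Definition inP (t : R) : Prop := 0 <= t < 1.

(* d_{P_n}(pt a, pt b): normalized counterclockwise arc length *)
Definition dP (a b : R) : R := frac (b - a).

(* directed Vietoris--Rips edge pt a -> pt b in VR_<(P_n; r) *)
Definition vr_edge (n : nat) (r a b : R) : Prop :=
  inP a /\ inP b /\ a <> b /\ edist (pt n a) (pt n b) < r /\ dP a b <= dP b a.

Definition vr_cyclic (n : nat) (r : R) : Prop :=
  forall a b c, vr_edge n r a b -> inP c -> 0 < dP a c < dP a b ->
    vr_edge n r a c /\ vr_edge n r c b.

(* the set whose supremum is r_n *)
Definition rn_set (n : nat) (r : R) : Prop :=
  0 <= r /\ forall r', 0 < r' < r -> vr_cyclic n r'.

(* is_g n r a b : pt b = g_r(pt a), the first point met moving
   counterclockwise from pt a at Euclidean distance r *)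
Definition is_g (n : nat) (r a b : R) : Prop :=
  inP a /\ inP b /\
  exists s, 0 < s < 1 /\ b = frac (a + s) /\
    edist (pt n a) (pt n (a + s)) = r /\
    forall s', 0 < s' < s -> edist (pt n a) (pt n (a + s')) <> r.

(* g_lim n rn a b : pt b = g_{r_n}(pt a) = lim_{r -> r_n} g_r(pt a) (limit in R^2) *)
Definition g_lim (n : nat) (rn a b : R) : Prop :=
  inP a /\ inP b /\
  forall eps, 0 < eps -> exists delta, 0 < delta /\
    forall r, rn - delta < r < rn ->
      (exists c, is_g n r a c) /\
      (forall c, is_g n r a c -> edist (pt n c) (pt n b) < eps).

Definition g_step (n : nat) (rn r a b : R) : Prop :=
  (0 < r < rn /\ is_g n r a b) \/ (r = rn /\ g_lim n rn a b).

Definition is_star (n : nat) (rn : R) (l : nat) (r : R) (u : nat -> R) : Prop :=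
  0 < r <= rn /\
  (forall i, (i < 2 * l + 1)%nat -> inP (u i)) /\
  (forall i, (i < 2 * l + 1)%nat ->
     g_step n rn r (u i) (u ((i + 1) mod (2 * l + 1))%nat)) /\
  sum_f_R0 (fun i => dP (u i) (u ((i + 1) mod (2 * l + 1))%nat)) (2 * l) = INR l.

Definition is_special (n : nat) (p : R * R) : Prop :=
  exists k : nat, (k < n)%nat /\
    (p = vert n (INR k) \/
     p = ((fst (vert n (INR k)) + fst (vert n (INR k + 1))) / 2,
          (snd (vert n (INR k)) + snd (vert n (INR k + 1))) / 2)).

Definition num_special (n l : nat) (u : nat -> R) (N : nat) : Prop :=
  exists L : list (R * R), NoDup L /\ length L = N /\
    forall p, In p L <->
      ((exists i, (i < 2 * l + 1)%nat /\ p = pt n (u i)) /\ is_special n p).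

(* Parametrise P_n by normalised arc length t (period 1) and lift the star to reals
   U_0, U_1, ... with U_(k+1) = U_k + s(U_k), where s(a) is the step from a to the first point
   at distance r; then U_(k+2l+1) = U_k + l.  Cyclicity of VR_<(P_n; r), valid for all r <= r_n,
   makes this first-hit map monotone; it commutes with the rotations t |-> t + j/n and the
   reflections t |-> j/n - t reverse its orbits.  The point U_k is a vertex or an edge midpoint
   iff 2n U_k is an integer.  If U_i and U_j are both special, then U_j - U_i = c/n is a
   translation of the whole orbit by j - i indices, and comparing with the period gives
   (2l+1) c = (j - i) l n, so q = (2l+1)/gcd(n, 2l+1) divides j - i; a difference (2c+1)/(2n)
   is impossible, because composing the reflections through U_i and U_j gives the translation
   by 2(U_j - U_i), and then the same identity fails by parity.  Conversely a rotation-number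
   argument gives U_(k+q) = U_k + n' l/n (n = n' gcd(n, 2l+1)), so special points recur every q
   steps.  Since distinct indices give distinct points, the star has no special point or
   exactly gcd(n, 2l+1) of them. *)

From Stdlib Require Import Reals Lra Lia List ZArith Arith Classical.
Open Scope R_scope.

Lemma floorR_spec x : IZR (floorR x) <= x < IZR (floorR x) + 1.
Proof.
  unfold floorR. destruct (archimed x) as [H1 H2].
  rewrite minus_IZR. split; lra.
Qed.

Lemma floorR_unique k x : IZR k <= x < IZR k + 1 -> floorR x = k.
Proof.
  intros [H1 H2]. unfold floorR.
  assert (up x = (k + 1)%Z) as ->.
  { symmetry. apply tech_up; rewrite plus_IZR; lra. }
  lia.
Qed.

Lemma frac_bounds x : 0 <= frac x < 1.
Proof. unfold frac. pose proof (floorR_spec x). lra. Qed.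

Lemma frac_id x : 0 <= x < 1 -> frac x = x.
Proof. intros H. unfold frac. rewrite (floorR_unique 0 x); simpl; lra. Qed.

Lemma frac_add_IZR x z : frac (x + IZR z) = frac x.
Proof.
  unfold frac. rewrite (floorR_unique (floorR x + z)).
  - rewrite plus_IZR. ring.
  - rewrite plus_IZR. pose proof (floorR_spec x). lra.
Qed.

Lemma frac_sub_frac a b : frac (frac b - frac a) = frac (b - a).
Proof.
  unfold frac at 2 3.
  replace (b - IZR (floorR b) - (a - IZR (floorR a)))
    with ((b - a) + IZR (floorR a - floorR b)) by (rewrite minus_IZR; ring).
  apply frac_add_IZR.
Qed.

Lemma frac_opp x : 0 < x < 1 -> frac (- x) = 1 - x.
Proof.
  intros H. replace (- x) with ((1 - x) + IZR (-1)) by (simpl; ring).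
  rewrite frac_add_IZR. apply frac_id. lra.
Qed.

Lemma continuity_pt_eps (f : R -> R) x : continuity_pt f x -> forall eps, 0 < eps ->
  exists del, 0 < del /\ forall y, Rabs (y - x) < del -> Rabs (f y - f x) < eps.
Proof.
  intros Hc eps He. destruct (Hc eps He) as [del [Hd H]]. exists del. split; auto.
  intros y Hy. destruct (Req_dec y x) as [->|Hne].
  - rewrite Rminus_diag, Rabs_R0. auto.
  - apply (H y). repeat split; auto.
Qed.

Lemma continuity_locally_lipschitz (f : R -> R) K d : 0 < d ->
  (forall x y, x <= y <= x + d -> Rabs (f y - f x) <= K * (y - x)) -> continuity f.
Proof.
  intros Hd Hl x eps Heps.
  set (K' := Rabs K + 1).
  assert (HK' : 0 < K') by (unfold K'; pose proof (Rabs_pos K); lra).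
  exists (Rmin d (eps / K')). split.
  { apply Rmin_pos; [lra | apply Rdiv_lt_0_compat; lra]. }
  intros y [_ Hy]. simpl in *. unfold R_dist in *.
  pose proof (Rmin_l d (eps / K')). pose proof (Rmin_r d (eps / K')).
  assert (HKd : forall z, 0 <= z -> z < eps / K' -> K * z < eps).
  { intros z Hz0 Hz. apply Rle_lt_trans with (K' * z).
    - unfold K'. pose proof (Rle_abs K). nra.
    - apply (Rmult_lt_reg_r (/ K')); [apply Rinv_0_lt_compat; lra|].
      rewrite Rmult_comm, <- Rmult_assoc, Rinv_l, Rmult_1_l by lra. exact Hz. }
  destruct (Rle_or_lt x y).
  - rewrite Rabs_right in Hy by lra.
    eapply Rle_lt_trans; [apply Hl; lra | apply HKd; lra].
  - rewrite Rabs_left in Hy by lra. rewrite Rabs_minus_sym.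
    eapply Rle_lt_trans; [apply Hl; lra | apply HKd; lra].
Qed.

Lemma continuity_sqrt_dist2 (f g : R -> R) c d : continuity f -> continuity g ->
  continuity (fun t => sqrt ((c - f t) ^ 2 + (d - g t) ^ 2)).
Proof.
  intros Hf Hg x.
  apply (continuity_pt_comp (fun t => (c - f t) ^ 2 + (d - g t) ^ 2) sqrt).
  - reg.
  - apply continuity_pt_sqrt, Rplus_le_le_0_compat; apply pow2_ge_0.
Qed.

Lemma edist_eq0 p q : edist p q = 0 -> p = q.
Proof.
  unfold edist. intros E. apply sqrt_eq_0 in E.
  2:{ apply Rplus_le_le_0_compat; apply pow2_ge_0. }
  destruct p as [p1 p2], q as [q1 q2]; simpl in *.
  pose proof (pow2_ge_0 (p1 - q1)). pose proof (pow2_ge_0 (p2 - q2)).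
  assert (E1 : (p1 - q1) ^ 2 = 0) by lra. assert (E2 : (p2 - q2) ^ 2 = 0) by lra.
  f_equal; nra.
Qed.

Lemma edist_sqr p q : (edist p q) ^ 2 = (fst p - fst q) ^ 2 + (snd p - snd q) ^ 2.
Proof. unfold edist. apply pow2_sqrt, Rplus_le_le_0_compat; apply pow2_ge_0. Qed.

Lemma Rabs_coord_le_edist p q :
  Rabs (fst p - fst q) <= edist p q /\ Rabs (snd p - snd q) <= edist p q.
Proof.
  unfold edist. split; rewrite <- sqrt_Rsqr_abs; apply sqrt_le_1_alt; unfold Rsqr; simpl;
    [pose proof (pow2_ge_0 (snd p - snd q)) | pose proof (pow2_ge_0 (fst p - fst q))]; nra.
Qed.

(** * The polygon parametrised by arc length *)

Definition vert_x (n : nat) (k : R) : R := cos (2 * PI * k / INR n).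
Definition vert_y (n : nat) (k : R) : R := sin (2 * PI * k / INR n).

Definition rot (n : nat) (p : R * R) : R * R :=
  (fst p * cos (2 * PI / INR n) - snd p * sin (2 * PI / INR n),
   fst p * sin (2 * PI / INR n) + snd p * cos (2 * PI / INR n)).

Definition chord (n : nat) (a b : R) : R := edist (pt n a) (pt n b).

Lemma pt_on_edge n (k : Z) t : IZR k <= INR n * t <= IZR k + 1 ->
  pt n t = ((1 - (INR n * t - IZR k)) * vert_x n (IZR k) + (INR n * t - IZR k) * vert_x n (IZR k + 1),
            (1 - (INR n * t - IZR k)) * vert_y n (IZR k) + (INR n * t - IZR k) * vert_y n (IZR k + 1)).
Proof.
  intros [H1 H2]. unfold pt, vert, vert_x, vert_y; simpl.
  destruct (Rlt_or_le (INR n * t) (IZR k + 1)) as [H3|H3].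
  - rewrite (floorR_unique k); auto.
  - assert (E : INR n * t = IZR k + 1) by lra.
    rewrite E, (floorR_unique (k + 1)); rewrite plus_IZR; [|lra].
    replace (IZR k + 1 + 1) with (IZR k + 2) by ring.
    f_equal; ring_simplify; replace (IZR k + 1 - IZR k) with 1 by ring; ring.
Qed.

Lemma vert_bounds n k : -1 <= vert_x n k <= 1 /\ -1 <= vert_y n k <= 1.
Proof. split; [apply COS_bound | apply SIN_bound]. Qed.

Lemma vert_y_0 n : vert_y n 0 = 0.
Proof. unfold vert_y. rewrite Rmult_0_r. unfold Rdiv. rewrite Rmult_0_l. apply sin_0. Qed.

Lemma chord_sym n a b : chord n a b = chord n b a.
Proof. unfold chord, edist. f_equal. ring. Qed.

Lemma chord_diag n a : chord n a a = 0.
Proof.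
  unfold chord, edist.
  replace ((fst (pt n a) - fst (pt n a)) ^ 2 + (snd (pt n a) - snd (pt n a)) ^ 2) with 0 by ring.
  apply sqrt_0.
Qed.

Section Polygon.
Variable n : nat.
Hypothesis n_pos : (0 < n)%nat.
Let INR_n_pos : 0 < INR n := lt_0_INR n n_pos.

Lemma vert_x_succ k :
  vert_x n (k + 1) = vert_x n k * cos (2 * PI / INR n) - vert_y n k * sin (2 * PI / INR n).
Proof.
  pose proof INR_n_pos. unfold vert_x, vert_y. rewrite <- cos_plus. f_equal. field. lra.
Qed.

Lemma vert_y_succ k :
  vert_y n (k + 1) = vert_y n k * cos (2 * PI / INR n) + vert_x n k * sin (2 * PI / INR n).
Proof.
  pose proof INR_n_pos. unfold vert_x, vert_y. rewrite <- sin_plus. f_equal. field. lra.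
Qed.

Lemma vert_x_add_n k : vert_x n (k + INR n) = vert_x n k.
Proof.
  pose proof INR_n_pos. unfold vert_x.
  replace (2 * PI * (k + INR n) / INR n) with (2 * PI * k / INR n + 2 * INR 1 * PI)
    by (simpl; field; lra).
  apply cos_period.
Qed.

Lemma vert_y_add_n k : vert_y n (k + INR n) = vert_y n k.
Proof.
  pose proof INR_n_pos. unfold vert_y.
  replace (2 * PI * (k + INR n) / INR n) with (2 * PI * k / INR n + 2 * INR 1 * PI)
    by (simpl; field; lra).
  apply sin_period.
Qed.

Lemma vert_x_opp k : vert_x n (- k) = vert_x n k.
Proof. pose proof INR_n_pos. unfold vert_x. rewrite <- cos_neg. f_equal. field. lra. Qed.

Lemma vert_y_opp k : vert_y n (- k) = - vert_y n k.
Proof. pose proof INR_n_pos. unfold vert_y. rewrite <- sin_neg. f_equal. field. lra. Qed.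

Lemma pt_div_n (k : nat) s : 0 <= s <= 1 ->
  pt n ((INR k + s) / INR n) =
  ((1 - s) * vert_x n (INR k) + s * vert_x n (INR k + 1),
   (1 - s) * vert_y n (INR k) + s * vert_y n (INR k + 1)).
Proof.
  intros Hs. pose proof INR_n_pos.
  assert (E : INR n * ((INR k + s) / INR n) = IZR (Z.of_nat k) + s)
    by (rewrite <- INR_IZR_INZ; field; lra).
  rewrite (pt_on_edge n (Z.of_nat k)) by (rewrite E; lra).
  rewrite E, <- INR_IZR_INZ. f_equal; f_equal; ring.
Qed.

Lemma pt_add_inv_n t : pt n (t + / INR n) = rot n (pt n t).
Proof.
  pose proof INR_n_pos.
  set (k := floorR (INR n * t)). pose proof (floorR_spec (INR n * t)) as Hk. fold k in Hk.
  replace (INR n * t) with (INR n * (t + / INR n) - 1) in Hk by (field; lra).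
  rewrite (pt_on_edge n (k + 1) (t + / INR n)) by (rewrite plus_IZR; lra).
  rewrite (pt_on_edge n k t) by (replace (INR n * t) with (INR n * (t + / INR n) - 1) by (field; lra); lra).
  replace (INR n * (t + / INR n)) with (INR n * t + 1) by (field; lra).
  rewrite plus_IZR. unfold rot; simpl.
  replace (INR n * t + 1 - (IZR k + 1)) with (INR n * t - IZR k) by ring.
  rewrite (vert_x_succ (IZR k + 1)), (vert_y_succ (IZR k + 1)), (vert_x_succ (IZR k)), (vert_y_succ (IZR k)).
  f_equal; ring.
Qed.

Lemma pt_add_1 t : pt n (t + 1) = pt n t.
Proof.
  pose proof INR_n_pos.
  set (k := floorR (INR n * t)). pose proof (floorR_spec (INR n * t)) as Hk. fold k in Hk.
  rewrite (pt_on_edge n (k + Z.of_nat n) (t + 1)) by (rewrite plus_IZR, <- INR_IZR_INZ; lra).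
  rewrite (pt_on_edge n k t) by lra.
  rewrite plus_IZR, <- INR_IZR_INZ.
  replace (IZR k + INR n + 1) with (IZR k + 1 + INR n) by ring.
  rewrite !vert_x_add_n, !vert_y_add_n. f_equal; ring.
Qed.

Lemma pt_add_INR t m : pt n (t + INR m) = pt n t.
Proof.
  induction m as [|m IH]; [simpl; rewrite Rplus_0_r; auto|].
  rewrite S_INR, <- Rplus_assoc, pt_add_1. auto.
Qed.

Lemma pt_add_IZR t z : pt n (t + IZR z) = pt n t.
Proof.
  destruct (Z_le_gt_dec 0 z).
  - rewrite <- (Z2Nat.id z), <- INR_IZR_INZ by lia. apply pt_add_INR.
  - rewrite <- (pt_add_INR (t + IZR z) (Z.to_nat (- z))). f_equal.
    rewrite INR_IZR_INZ, Z2Nat.id by lia. rewrite opp_IZR. ring.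
Qed.

Lemma pt_frac t : pt n (frac t) = pt n t.
Proof.
  unfold frac. replace (t - IZR (floorR t)) with (t + IZR (- floorR t)) by (rewrite opp_IZR; ring).
  apply pt_add_IZR.
Qed.

Lemma pt_opp t : pt n (- t) = (fst (pt n t), - snd (pt n t)).
Proof.
  set (k := floorR (INR n * t)). pose proof (floorR_spec (INR n * t)) as Hk. fold k in Hk.
  rewrite (pt_on_edge n (- k - 1) (- t)) by (rewrite minus_IZR, opp_IZR; lra).
  rewrite (pt_on_edge n k t) by lra. simpl.
  rewrite minus_IZR, opp_IZR.
  replace (- IZR k - 1 + 1) with (- IZR k) by ring.
  replace (- IZR k - 1) with (- (IZR k + 1)) by ring.
  rewrite !vert_x_opp, !vert_y_opp. f_equal; ring.
Qed.

Lemma edist_rot p q : edist (rot n p) (rot n q) = edist p q.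
Proof.
  unfold edist, rot; simpl. f_equal.
  pose proof (sin2_cos2 (2 * PI / INR n)) as S. unfold Rsqr in S.
  set (c := cos (2 * PI / INR n)) in *. set (s := sin (2 * PI / INR n)) in *.
  transitivity (((fst p - fst q) ^ 2 + (snd p - snd q) ^ 2) * (s * s + c * c)); [ring|].
  rewrite S. ring.
Qed.

Lemma chord_add_INR_div a b (j : nat) :
  chord n (a + INR j / INR n) (b + INR j / INR n) = chord n a b.
Proof.
  pose proof INR_n_pos. induction j as [|j IH].
  - simpl. unfold Rdiv. rewrite Rmult_0_l, !Rplus_0_r. auto.
  - rewrite S_INR.
    replace (a + (INR j + 1) / INR n) with ((a + INR j / INR n) + / INR n) by (field; lra).
    replace (b + (INR j + 1) / INR n) with ((b + INR j / INR n) + / INR n) by (field; lra).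
    unfold chord in *. rewrite !pt_add_inv_n, edist_rot. auto.
Qed.

Lemma chord_add_IZR_div a b (j : Z) :
  chord n (a + IZR j / INR n) (b + IZR j / INR n) = chord n a b.
Proof.
  pose proof INR_n_pos.
  destruct (Z_le_gt_dec 0 j).
  - rewrite <- (Z2Nat.id j), <- INR_IZR_INZ by lia. apply chord_add_INR_div.
  - rewrite <- (chord_add_INR_div (a + IZR j / INR n) (b + IZR j / INR n) (Z.to_nat (- j))).
    rewrite (INR_IZR_INZ (Z.to_nat (- j))), Z2Nat.id, opp_IZR by lia.
    f_equal; field; lra.
Qed.

Lemma chord_add_IZR_l a b z : chord n (a + IZR z) b = chord n a b.
Proof. unfold chord. rewrite pt_add_IZR. auto. Qed.

Lemma chord_add_IZR_r a b z : chord n a (b + IZR z) = chord n a b.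
Proof. unfold chord. rewrite (pt_add_IZR b). auto. Qed.

Lemma chord_reflect (j : Z) a b : chord n (IZR j / INR n - a) (IZR j / INR n - b) = chord n a b.
Proof.
  replace (IZR j / INR n - a) with (- a + IZR j / INR n) by ring.
  replace (IZR j / INR n - b) with (- b + IZR j / INR n) by ring.
  rewrite chord_add_IZR_div. unfold chord, edist. rewrite !pt_opp. simpl. f_equal. ring.
Qed.

Lemma pt_coord_lipschitz (sel : R * R -> R) (g : R -> R) :
  (forall k, -1 <= g k <= 1) ->
  (forall (k : Z) t, IZR k <= INR n * t <= IZR k + 1 ->
     sel (pt n t) = (1 - (INR n * t - IZR k)) * g (IZR k) + (INR n * t - IZR k) * g (IZR k + 1)) ->
  forall x y, x <= y <= x + / INR n -> Rabs (sel (pt n y) - sel (pt n x)) <= 2 * INR n * (y - x).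
Proof.
  intros Hb Hsel x y [H1 H2]. pose proof INR_n_pos.
  assert (Habs : forall d w, 0 <= d -> -2 <= w <= 2 -> Rabs (d * w) <= 2 * d).
  { intros d w Hd Hw. unfold Rabs. destruct (Rcase_abs (d * w)); nra. }
  set (k := floorR (INR n * x)). pose proof (floorR_spec (INR n * x)) as Hk. fold k in Hk.
  assert (Hy : INR n * y <= INR n * x + 1).
  { replace (INR n * x + 1) with (INR n * (x + / INR n)) by (field; lra).
    apply Rmult_le_compat_l; lra. }
  assert (Hxy : INR n * x <= INR n * y) by (apply Rmult_le_compat_l; lra).
  pose proof (Hb (IZR k)); pose proof (Hb (IZR k + 1)); pose proof (Hb (IZR k + 1 + 1)).
  rewrite (Hsel k x) by lra.
  destruct (Rle_or_lt (INR n * y) (IZR k + 1)).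
  - rewrite (Hsel k y) by lra.
    replace (_ - _) with ((INR n * y - INR n * x) * (g (IZR k + 1) - g (IZR k))) by ring.
    replace (2 * INR n * (y - x)) with (2 * (INR n * y - INR n * x)) by ring.
    apply Habs; lra.
  - rewrite (Hsel (k + 1)%Z y) by (rewrite plus_IZR; lra). rewrite plus_IZR.
    replace (_ - _) with ((INR n * y - (IZR k + 1)) * (g (IZR k + 1 + 1) - g (IZR k + 1)) +
                          (IZR k + 1 - INR n * x) * (g (IZR k + 1) - g (IZR k))) by ring.
    eapply Rle_trans; [apply Rabs_triang|].
    replace (2 * INR n * (y - x))
      with (2 * (INR n * y - (IZR k + 1)) + 2 * (IZR k + 1 - INR n * x)) by ring.
    apply Rplus_le_compat; apply Habs; lra.
Qed.

Lemma continuity_pt_x : continuity (fun t => fst (pt n t)).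
Proof.
  apply (continuity_locally_lipschitz _ (2 * INR n) (/ INR n)).
  - apply Rinv_0_lt_compat, INR_n_pos.
  - apply (pt_coord_lipschitz fst (vert_x n)).
    + intros k. apply vert_bounds.
    + intros k t Hk. rewrite (pt_on_edge n k t Hk). reflexivity.
Qed.

Lemma continuity_pt_y : continuity (fun t => snd (pt n t)).
Proof.
  apply (continuity_locally_lipschitz _ (2 * INR n) (/ INR n)).
  - apply Rinv_0_lt_compat, INR_n_pos.
  - apply (pt_coord_lipschitz snd (vert_y n)).
    + intros k. apply vert_bounds.
    + intros k t Hk. rewrite (pt_on_edge n k t Hk). reflexivity.
Qed.

Lemma continuity_chord_from a c : continuity (fun s => chord n a (c + s)).
Proof.
  assert (Hshift : forall f, continuity f -> continuity (fun s => f (c + s))).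
  { intros f Hf x. apply (continuity_pt_comp (fun s => c + s) f); [reg | apply Hf]. }
  unfold chord, edist.
  apply (continuity_sqrt_dist2 (fun s => fst (pt n (c + s))) (fun s => snd (pt n (c + s)))).
  - apply (Hshift (fun t => fst (pt n t))), continuity_pt_x.
  - apply (Hshift (fun t => snd (pt n t))), continuity_pt_y.
Qed.

End Polygon.

Lemma cos_lt_cos_between a t : 0 <= a -> a < t < 2 * PI - a -> cos t < cos a.
Proof.
  intros Ha Ht. pose proof PI_RGT_0.
  destruct (Rle_or_lt t PI) as [L|L].
  - apply cos_decreasing_1; lra.
  - replace t with (- (2 * PI - t) + 2 * INR 1 * PI) by (simpl; ring).
    rewrite cos_period, cos_neg. apply cos_decreasing_1; lra.
Qed.

Lemma line_circle_three_points px py qx qy cx cy t1 t2 t3 r2 :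
  t1 < t2 < t3 ->
  (px + t1 * (qx - px) - cx) ^ 2 + (py + t1 * (qy - py) - cy) ^ 2 = r2 ->
  (px + t2 * (qx - px) - cx) ^ 2 + (py + t2 * (qy - py) - cy) ^ 2 = r2 ->
  (px + t3 * (qx - px) - cx) ^ 2 + (py + t3 * (qy - py) - cy) ^ 2 = r2 ->
  (qx - px) ^ 2 + (qy - py) ^ 2 = 0.
Proof.
  intros Ht E1 E2 E3.
  set (A := (qx - px) ^ 2 + (qy - py) ^ 2).
  set (B := 2 * ((qx - px) * (px - cx) + (qy - py) * (py - cy))).
  (* the squared distance at [t] is [A t^2 + B t + const] *)
  assert (F1 : (t2 - t1) * (A * (t1 + t2) + B) = 0) by (unfold A, B; rewrite <- E2 in E1; nra).
  assert (F2 : (t3 - t2) * (A * (t2 + t3) + B) = 0) by (unfold A, B; rewrite <- E3 in E2; nra).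
  apply Rmult_integral in F1 as [F1|F1]; [lra|].
  apply Rmult_integral in F2 as [F2|F2]; [lra|].
  assert (F3 : A * (t3 - t1) = 0) by lra.
  apply Rmult_integral in F3 as [F3|F3]; lra.
Qed.

Section Polygon3.
Variable n : nat.
Hypothesis n_ge3 : (3 <= n)%nat.
Let INR_n_ge3 : 3 <= INR n.
Proof. replace 3 with (INR 3) by (simpl; ring). apply le_INR, n_ge3. Qed.

Lemma vert_edge_sqr_pos k :
  0 < (vert_x n (k + 1) - vert_x n k) ^ 2 + (vert_y n (k + 1) - vert_y n k) ^ 2.
Proof.
  pose proof INR_n_ge3. pose proof PI_RGT_0.
  rewrite vert_x_succ, vert_y_succ by lia. unfold vert_x, vert_y.
  pose proof (sin2_cos2 (2 * PI * k / INR n)) as S1.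
  pose proof (sin2_cos2 (2 * PI / INR n)) as S2. unfold Rsqr in *.
  set (c := cos (2 * PI * k / INR n)) in *. set (s := sin (2 * PI * k / INR n)) in *.
  set (c' := cos (2 * PI / INR n)) in *. set (s' := sin (2 * PI / INR n)) in *.
  replace (_ + _) with ((s * s + c * c) * (s' * s' + c' * c' - 2 * c' + 1)) by ring.
  rewrite S1, S2.
  assert (C : c' < cos 0).
  { apply cos_lt_cos_between; [lra|]. split.
    - apply Rdiv_lt_0_compat; lra.
    - apply (Rmult_lt_reg_r (INR n)); [lra|]. unfold Rdiv.
      rewrite Rmult_assoc, Rinv_l by lra. nra. }
  rewrite cos_0 in C. lra.
Qed.

Lemma chord_not_constant b r x y : x < y -> ~ (forall c, x < c < y -> chord n c b = r).
Proof.
  intros Hxy All. pose proof INR_n_ge3.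
  set (y1 := (x + y) / 2).
  set (k := floorR (INR n * y1)). pose proof (floorR_spec (INR n * y1)) as Hk. fold k in Hk.
  assert (Hk1 : y1 < (IZR k + 1) / INR n).
  { apply (Rmult_lt_reg_l (INR n)); [lra|].
    replace (INR n * ((IZR k + 1) / INR n)) with (IZR k + 1) by (field; lra). lra. }
  set (e := Rmin (y - y1) ((IZR k + 1) / INR n - y1)).
  assert (He : 0 < e) by (apply Rmin_pos; unfold y1 in *; lra).
  assert (He1 : e <= y - y1) by apply Rmin_l.
  assert (He2 : e <= (IZR k + 1) / INR n - y1) by apply Rmin_r.
  assert (On_edge : forall c, y1 <= c <= y1 + e / 2 ->
    (vert_x n (IZR k) + (INR n * c - IZR k) * (vert_x n (IZR k + 1) - vert_x n (IZR k)) - fst (pt n b)) ^ 2 +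
    (vert_y n (IZR k) + (INR n * c - IZR k) * (vert_y n (IZR k + 1) - vert_y n (IZR k)) - snd (pt n b)) ^ 2
    = r ^ 2).
  { intros c Hc.
    assert (Hkc : IZR k <= INR n * c <= IZR k + 1).
    { split.
      - apply Rle_trans with (INR n * y1); [lra | apply Rmult_le_compat_l; lra].
      - replace (IZR k + 1) with (INR n * ((IZR k + 1) / INR n)) by (field; lra).
        apply Rmult_le_compat_l; lra. }
    rewrite <- (All c) by (unfold y1 in *; lra).
    unfold chord. rewrite edist_sqr, (pt_on_edge n k c Hkc). simpl. f_equal; f_equal; ring. }
  assert (Ht : INR n * y1 - IZR k < INR n * (y1 + e / 4) - IZR k < INR n * (y1 + e / 2) - IZR k)
    by (split; nra).
  pose proof (line_circle_three_points _ _ _ _ _ _ _ _ _ _ Ht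
    (On_edge y1 ltac:(lra)) (On_edge (y1 + e / 4) ltac:(lra)) (On_edge (y1 + e / 2) ltac:(lra))).
  pose proof (vert_edge_sqr_pos (IZR k)). lra.
Qed.

Lemma vert_y_1_pos : 0 < vert_y n 1.
Proof.
  pose proof INR_n_ge3. pose proof PI_RGT_0.
  unfold vert_y. rewrite Rmult_1_r. apply sin_gt_0.
  - apply Rdiv_lt_0_compat; lra.
  - apply (Rmult_lt_reg_r (INR n)); [lra|]. unfold Rdiv. rewrite Rmult_assoc, Rinv_l by lra. nra.
Qed.

Lemma cos_odd_multiple_lt (m : R) : 1 < m < 2 * INR n - 1 ->
  cos (m * PI / INR n) < cos (PI / INR n).
Proof.
  intros Hm. pose proof INR_n_ge3. pose proof PI_RGT_0.
  apply cos_lt_cos_between.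
  - apply Rlt_le, Rdiv_lt_0_compat; lra.
  - replace (2 * PI - PI / INR n) with ((2 * INR n - 1) * PI / INR n) by (field; lra).
    unfold Rdiv. split; apply Rmult_lt_compat_r; try (apply Rinv_0_lt_compat; lra); nra.
Qed.

Lemma cos_odd_multiple_le (m : R) : 1 <= m <= 2 * INR n - 1 ->
  cos (m * PI / INR n) <= cos (PI / INR n).
Proof.
  intros Hm. pose proof INR_n_ge3.
  destruct (Req_dec m 1) as [->|N1]; [rewrite Rmult_1_l; lra|].
  destruct (Req_dec m (2 * INR n - 1)) as [->|N2].
  - replace ((2 * INR n - 1) * PI / INR n) with (- (PI / INR n) + 2 * INR 1 * PI) by (simpl; field; lra).
    rewrite cos_period, cos_neg. lra.
  - apply Rlt_le, cos_odd_multiple_lt. lra.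
Qed.

Definition bisector_dot (n : nat) (p : R * R) : R :=
  fst p * cos (PI / INR n) + snd p * sin (PI / INR n).

Lemma bisector_dot_pt_on_edge (k : Z) t : IZR k <= INR n * t <= IZR k + 1 ->
  bisector_dot n (pt n t) =
  (1 - (INR n * t - IZR k)) * cos ((2 * IZR k - 1) * PI / INR n) +
  (INR n * t - IZR k) * cos ((2 * IZR k + 1) * PI / INR n).
Proof.
  intros Hk. pose proof INR_n_ge3.
  assert (Vdot : forall j, vert_x n j * cos (PI / INR n) + vert_y n j * sin (PI / INR n)
                           = cos ((2 * j - 1) * PI / INR n)).
  { intros j. unfold vert_x, vert_y. rewrite <- cos_minus. f_equal. field. lra. }
  unfold bisector_dot. rewrite (pt_on_edge n k t Hk). simpl.
  replace ((2 * IZR k + 1)) with (2 * (IZR k + 1) - 1) by ring.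
  rewrite <- !Vdot. ring.
Qed.

(* The functional [bisector_dot] equals [cos (PI / n)] on the first edge and is smaller on
   every other edge, except at the two vertices that edge shares with the first one. *)
Lemma pt_inj_first_edge x y : 0 <= INR n * x < 1 -> 0 <= y < 1 -> pt n x = pt n y -> x = y.
Proof.
  intros Hx Hy Heq. pose proof INR_n_ge3. pose proof PI_RGT_0.
  set (k := floorR (INR n * y)). pose proof (floorR_spec (INR n * y)) as Hk. fold k in Hk.
  clearbody k.
  assert (Hk0 : (0 <= k)%Z) by (assert (Hk' : -1 < IZR k) by nra; apply lt_IZR in Hk'; lia).
  assert (Hkn : (k < Z.of_nat n)%Z) by (apply lt_IZR; rewrite <- INR_IZR_INZ; nra).
  assert (Hdot := bisector_dot_pt_on_edge 0 x ltac:(simpl; lra)).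
  rewrite Heq, (bisector_dot_pt_on_edge k y) in Hdot by lra.
  replace ((2 * IZR 0 - 1) * PI / INR n) with (- (PI / INR n)) in Hdot by (simpl; field; lra).
  replace ((2 * IZR 0 + 1) * PI / INR n) with (PI / INR n) in Hdot by (simpl; field; lra).
  rewrite cos_neg in Hdot.
  assert (Hsnd := f_equal snd Heq).
  rewrite (pt_on_edge n 0 x), (pt_on_edge n k y) in Hsnd by (simpl; lra). simpl in Hsnd.
  set (s := INR n * x) in *. set (s' := INR n * y - IZR k) in *.
  assert (Hs' : 0 <= s' < 1) by (unfold s'; lra).
  replace ((1 - (s - 0)) * cos (PI / INR n) + (s - 0) * cos (PI / INR n))
    with (cos (PI / INR n)) in Hdot by ring.
  pose proof vert_y_1_pos.
  rewrite Rplus_0_l, Rminus_0_r, vert_y_0 in Hsnd.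
  destruct (Z.eq_dec k 0) as [Ek|Nk].
  - subst k. simpl in Hsnd. rewrite Rplus_0_l, vert_y_0 in Hsnd.
    assert (s = s') by (apply (Rmult_eq_reg_r (vert_y n 1)); lra).
    unfold s, s' in *. apply (Rmult_eq_reg_l (INR n)); lra.
  - exfalso.
    assert (Hk1 : 1 <= IZR k) by (apply IZR_le; lia).
    assert (Hkn' : IZR k + 1 <= INR n) by (rewrite INR_IZR_INZ, <- plus_IZR; apply IZR_le; lia).
    assert (HB := cos_odd_multiple_le (2 * IZR k + 1) ltac:(lra)).
    destruct (Z.eq_dec k 1) as [Ek1|Nk1].
    + subst k. simpl in Hdot, Hsnd.
      replace ((2 * 1 - 1) * PI / INR n) with (PI / INR n) in Hdot by (field; lra).
      assert (HB' := cos_odd_multiple_lt (2 * 1 + 1) ltac:(lra)).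
      assert (Es' : s' = 0) by nra. rewrite Es' in Hsnd.
      assert (s = 1) by nra. lra.
    + assert (Hk2 : 2 <= IZR k) by (apply IZR_le; lia).
      assert (HA := cos_odd_multiple_lt (2 * IZR k - 1) ltac:(lra)).
      nra.
Qed.

Lemma pt_inj x y : inP x -> inP y -> pt n x = pt n y -> x = y.
Proof.
  unfold inP. intros Hx Hy Heq. pose proof INR_n_ge3.
  set (m := floorR (INR n * x)). pose proof (floorR_spec (INR n * x)) as Hm. fold m in Hm.
  assert (Hshift : pt n (x + IZR (- m) / INR n) = pt n (frac (y + IZR (- m) / INR n))).
  { rewrite pt_frac by lia. apply edist_eq0.
    change (chord n (x + IZR (- m) / INR n) (y + IZR (- m) / INR n) = 0).
    rewrite chord_add_IZR_div by lia. unfold chord. rewrite Heq. apply chord_diag. }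
  apply pt_inj_first_edge in Hshift; [| | apply frac_bounds].
  - unfold frac in Hshift. set (z := floorR (y + IZR (- m) / INR n)) in Hshift.
    assert (Hz : -1 < IZR z < 1) by lra.
    destruct Hz as [Hz1 Hz2]. apply lt_IZR in Hz1, Hz2.
    replace z with 0%Z in Hshift by lia. simpl in Hshift. lra.
  - rewrite opp_IZR. replace (INR n * (x + - IZR m / INR n)) with (INR n * x - IZR m) by (field; lra).
    lra.
Qed.

Lemma is_special_pt t : inP t -> is_special n (pt n t) <-> exists z, 2 * INR n * t = IZR z.
Proof.
  intros Ht. pose proof INR_n_ge3. pose proof Ht as [Ht0 Ht1].
  assert (Hin : forall (k : nat) s, (k < n)%nat -> 0 <= s <= 1 / 2 -> inP ((INR k + s) / INR n)).
  { intros k s Hk Hs. pose proof (pos_INR k).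
    assert (INR k + 1 <= INR n) by (rewrite <- S_INR; apply le_INR; lia).
    split; [apply Rmult_le_pos; [lra | apply Rlt_le, Rinv_0_lt_compat; lra]|].
    apply (Rmult_lt_reg_r (INR n)); [lra|]. unfold Rdiv. rewrite Rmult_assoc, Rinv_l; lra. }
  assert (Hvert : forall k : nat, vert n (INR k) = pt n ((INR k + 0) / INR n)).
  { intros k. rewrite pt_div_n by (lia || lra). unfold vert, vert_x, vert_y. f_equal; ring. }
  assert (Hmid : forall k : nat,
    ((fst (vert n (INR k)) + fst (vert n (INR k + 1))) / 2,
     (snd (vert n (INR k)) + snd (vert n (INR k + 1))) / 2) = pt n ((INR k + 1 / 2) / INR n)).
  { intros k. rewrite pt_div_n by (lia || lra). unfold vert, vert_x, vert_y. simpl. f_equal; field. }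
  split.
  - intros [k [Hk [E|E]]]; [rewrite Hvert in E | rewrite Hmid in E];
      (apply pt_inj in E; [rewrite E | exact Ht | apply Hin; auto; lra]).
    + exists (2 * Z.of_nat k)%Z. rewrite mult_IZR, <- INR_IZR_INZ. field. lra.
    + exists (2 * Z.of_nat k + 1)%Z. rewrite plus_IZR, mult_IZR, <- INR_IZR_INZ. field. lra.
  - intros [z Hz].
    assert (Hz0 : (0 <= z)%Z) by (apply le_IZR; rewrite <- Hz; nra).
    assert (Hz1 : (z < 2 * Z.of_nat n)%Z)
      by (apply lt_IZR; rewrite mult_IZR, <- INR_IZR_INZ, <- Hz; nra).
    destruct (Z.Even_or_Odd z) as [[k Hk]|[k Hk]]; exists (Z.to_nat k); split; try lia.
    + left. rewrite Hvert. f_equal.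
      rewrite INR_IZR_INZ, Z2Nat.id by lia.
      apply (Rmult_eq_reg_l (2 * INR n)); [|lra]. rewrite Hz, Hk, mult_IZR. field. lra.
    + right. rewrite Hmid. f_equal.
      rewrite INR_IZR_INZ, Z2Nat.id by lia.
      apply (Rmult_eq_reg_l (2 * INR n)); [|lra]. rewrite Hz, Hk, plus_IZR, mult_IZR. field. lra.
Qed.

End Polygon3.

(** * First hits of a circle *)

(* [pt n (a + s)] is [g_r (pt n a)]. *)
Definition first_hit (n : nat) (r a s : R) : Prop :=
  0 < s < 1 /\ chord n a (a + s) = r /\ forall s', 0 < s' < s -> chord n a (a + s') <> r.

Definition hit_orbit (n : nat) (r : R) (W : nat -> R) : Prop :=
  forall k, first_hit n r (W k) (W (S k) - W k).

Lemma first_hit_unique n r a s s' : first_hit n r a s -> first_hit n r a s' -> s = s'.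
Proof.
  intros [H1 [H2 H3]] [H1' [H2' H3']].
  destruct (Rtotal_order s s') as [L|[L|L]]; auto; exfalso.
  - apply (H3' s); auto. lra.
  - apply (H3 s'); auto. lra.
Qed.

Lemma hit_orbit_unique n r W W' : hit_orbit n r W -> hit_orbit n r W' -> W O = W' O ->
  forall k, W k = W' k.
Proof.
  intros O1 O2 E0 k. induction k as [|k IH]; auto.
  pose proof (O1 k) as A. pose proof (O2 k) as B. rewrite IH in A.
  pose proof (first_hit_unique _ _ _ _ _ A B). lra.
Qed.

Lemma hit_orbit_tail n r W m : hit_orbit n r W -> hit_orbit n r (fun k => W (m + k)%nat).
Proof. intros O k. replace (m + S k)%nat with (S (m + k)) by lia. apply O. Qed.

Section FirstHit.
Variable n : nat.
Hypothesis n_ge3 : (3 <= n)%nat.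
Variable r : R.
Hypothesis r_pos : 0 < r.
Let INR_n_pos : 0 < INR n.
Proof. apply lt_0_INR. lia. Qed.

Lemma chord_lt_before_first_hit a s s' : first_hit n r a s -> 0 < s' < s -> chord n a (a + s') < r.
Proof.
  intros [Hs [HD Hf]] Hs'.
  destruct (Rlt_or_le (chord n a (a + s')) r) as [L|L]; auto. exfalso.
  assert (L' : r < chord n a (a + s')) by (destruct L; auto; exfalso; apply (Hf s'); auto).
  assert (Hcont : continuity (fun t => chord n a (a + t) - r)).
  { apply continuity_minus; [apply continuity_chord_from; lia | apply continuity_const; intros ? ?; auto]. }
  destruct (IVT (fun t => chord n a (a + t) - r) 0 s' Hcont) as [z [Hz1 Hz2]];
    rewrite ?Rplus_0_r, ?chord_diag; try lra.
  destruct (Req_dec z 0) as [->|Hz0].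
  - rewrite Rplus_0_r, chord_diag in Hz2. lra.
  - apply (Hf z); lra.
Qed.

Lemma first_hit_add_IZR_div a s (j : Z) : first_hit n r a s -> first_hit n r (a + IZR j / INR n) s.
Proof.
  intros [H1 [H2 H3]]. split; auto. split.
  - replace (a + IZR j / INR n + s) with ((a + s) + IZR j / INR n) by ring.
    rewrite chord_add_IZR_div by lia. auto.
  - intros s' Hs'. replace (a + IZR j / INR n + s') with ((a + s') + IZR j / INR n) by ring.
    rewrite chord_add_IZR_div by lia. auto.
Qed.

Lemma first_hit_add_IZR a s (z : Z) : first_hit n r a s -> first_hit n r (a + IZR z) s.
Proof.
  intros [H1 [H2 H3]]. split; auto. split.
  - replace (a + IZR z + s) with ((a + s) + IZR z) by ring.
    rewrite chord_add_IZR_l, chord_add_IZR_r by lia. auto.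
  - intros s' Hs'. replace (a + IZR z + s') with ((a + s') + IZR z) by ring.
    rewrite chord_add_IZR_l, chord_add_IZR_r by lia. auto.
Qed.

Lemma hit_orbit_add_IZR_div W (j : Z) : hit_orbit n r W -> hit_orbit n r (fun k => W k + IZR j / INR n).
Proof.
  intros O k. replace (W (S k) + IZR j / INR n - (W k + IZR j / INR n)) with (W (S k) - W k) by ring.
  apply first_hit_add_IZR_div, O.
Qed.

Section Cyclic.
Hypothesis cyclic : vr_cyclic n r.

(* Cyclicity read on lifted parameters: [frac x -> frac y] is an edge. *)
Lemma chord_lt_between x y z : 0 < y - x <= 1 / 2 -> chord n x y < r -> x < z < y ->
  chord n x z < r /\ chord n z y < r.
Proof.
  intros Hxy Hd Hz.
  assert (Hdp : forall a b, 0 <= b - a < 1 -> dP (frac a) (frac b) = b - a)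
    by (intros a b Hab; unfold dP; rewrite frac_sub_frac; apply frac_id; lra).
  assert (Eyx : dP (frac y) (frac x) = 1 - (y - x)).
  { unfold dP. rewrite frac_sub_frac. replace (x - y) with (- (y - x)) by ring. apply frac_opp. lra. }
  assert (Hch : forall a b, edist (pt n (frac a)) (pt n (frac b)) = chord n a b)
    by (intros; unfold chord; rewrite !pt_frac by lia; auto).
  assert (He : vr_edge n r (frac x) (frac y)).
  { pose proof (frac_bounds x). pose proof (frac_bounds y).
    repeat split; try lra.
    - intros E. pose proof (Hdp x y ltac:(lra)) as Exy. unfold dP in Exy.
      rewrite E, Rminus_diag, frac_id in Exy; lra.
    - rewrite Hch. exact Hd.
    - rewrite Hdp, Eyx; lra. }
  destruct (cyclic _ _ (frac z) He) as [[_ [_ [_ [E1 _]]]] [_ [_ [_ [E2 _]]]]].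
  - apply frac_bounds.
  - rewrite !Hdp; lra.
  - rewrite !Hch in E1, E2. auto.
Qed.

Lemma first_hit_le_half a s : first_hit n r a s -> s <= 1 / 2.
Proof.
  intros Hs. destruct (Rle_or_lt s (1 / 2)) as [L|L]; auto. exfalso.
  pose proof Hs as [Hs1 [HD _]].
  set (c := a + (s + 1 / 2) / 2).
  assert (Hac : chord n c (a + IZR 1) < r).
  { rewrite chord_sym, chord_add_IZR_l by lia. apply (chord_lt_before_first_hit a s); auto. unfold c; lra. }
  assert (E : chord n (a + s) (a + IZR 1) < r)
    by (apply (chord_lt_between c (a + IZR 1) (a + s)); auto; unfold c; simpl; lra).
  rewrite chord_sym, chord_add_IZR_l in E by lia. lra.
Qed.

Lemma chord_to_first_hit_le a s x : first_hit n r a s -> a < x < a + s -> chord n x (a + s) <= r.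
Proof.
  intros Hs Hx. pose proof (first_hit_le_half a s Hs).
  destruct (Rle_or_lt (chord n x (a + s)) r) as [L|L]; auto. exfalso.
  destruct (continuity_pt_eps (fun t => chord n x (x + t)) (a + s - x)
              (continuity_chord_from n ltac:(lia) x x (a + s - x)) (chord n x (a + s) - r))
    as [del [Hdel Hd]]; [lra|].
  set (e := Rmin (del / 2) ((a + s - x) / 2)).
  assert (He : 0 < e) by (apply Rmin_pos; lra).
  assert (He1 : e <= del / 2) by apply Rmin_l.
  assert (He2 : e <= (a + s - x) / 2) by apply Rmin_r.
  specialize (Hd (a + s - x - e)).
  replace (x + (a + s - x)) with (a + s) in Hd by ring.
  replace (x + (a + s - x - e)) with (a + (s - e)) in Hd by ring.
  replace (a + s - x - e - (a + s - x)) with (- e) in Hd by ring.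
  rewrite Rabs_Ropp, Rabs_right in Hd by lra.
  specialize (Hd ltac:(lra)). apply Rabs_def2 in Hd.
  destruct (chord_lt_between a (a + (s - e)) x) as [_ E]; try lra.
  apply (chord_lt_before_first_hit a s); auto. lra.
Qed.

(* Equality would force [chord _ c (a + s) = r] on a whole interval of [c]'s,
   impossible since a circle meets each edge in at most two points. *)
Lemma chord_to_first_hit_lt a s x : first_hit n r a s -> a < x < a + s -> chord n x (a + s) < r.
Proof.
  intros Hs Hx. pose proof (first_hit_le_half a s Hs).
  destruct (Rle_lt_or_eq_dec _ _ (chord_to_first_hit_le a s x Hs Hx)) as [L|L]; auto. exfalso.
  apply (chord_not_constant n n_ge3 (a + s) r a x); [lra|]. intros c Hc.
  destruct (Rle_lt_or_eq_dec _ _ (chord_to_first_hit_le a s c Hs ltac:(lra))) as [L'|L']; auto.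
  destruct (chord_lt_between c (a + s) x) as [_ E]; lra.
Qed.

Lemma first_hit_mono a s a' s' : first_hit n r a s -> first_hit n r a' s' -> a < a' ->
  a + s <= a' + s'.
Proof.
  intros Hs Hs' Ha. pose proof Hs' as [H1' [H2' _]].
  destruct (Rle_or_lt (a + s) a') as [L|L]; [lra|].
  destruct (Rle_or_lt (a + s) (a' + s')) as [L2|L2]; auto. exfalso.
  pose proof (first_hit_le_half a s Hs).
  assert (Hb : chord n a' (a + s) < r) by (apply (chord_to_first_hit_lt a s a' Hs); lra).
  destruct (chord_lt_between a' (a + s) (a' + s')) as [E _]; lra.
Qed.

Lemma first_hit_reflect a s (j : Z) : first_hit n r a s -> first_hit n r (IZR j / INR n - a - s) s.
Proof.
  intros Hs. pose proof Hs as [H1 [H2 H3]]. split; auto.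
  replace (IZR j / INR n - a - s) with (IZR j / INR n - (a + s)) by ring. split.
  - replace (IZR j / INR n - (a + s) + s) with (IZR j / INR n - a) by ring.
    rewrite chord_reflect, chord_sym by lia. auto.
  - intros s' Hs'.
    replace (IZR j / INR n - (a + s) + s') with (IZR j / INR n - (a + s - s')) by ring.
    rewrite chord_reflect, chord_sym by lia.
    assert (chord n (a + s - s') (a + s) < r) by (apply (chord_to_first_hit_lt a s); auto; lra).
    lra.
Qed.

Lemma hit_orbit_le W W' : hit_orbit n r W -> hit_orbit n r W' -> W O <= W' O ->
  forall k, W k <= W' k.
Proof.
  intros O1 O2 E0 k. induction k as [|k IH]; auto.
  pose proof (O1 k) as A. pose proof (O2 k) as B.
  destruct (Rle_lt_or_eq_dec _ _ IH) as [L|L].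
  - pose proof (first_hit_mono _ _ _ _ A B L). lra.
  - rewrite L in A. pose proof (first_hit_unique _ _ _ _ _ A B). lra.
Qed.

End Cyclic.
End FirstHit.

(** * The critical radius *)

Lemma vr_cyclic_below_rn n rn r : is_lub (rn_set n) rn -> 0 < r -> r < rn -> vr_cyclic n r.
Proof.
  intros [_ Hleast] Hr Hrn.
  destruct (classic (exists r0, rn_set n r0 /\ r < r0)) as [[r0 [[_ Hr0] L]]|Hno].
  - apply Hr0. lra.
  - assert (rn <= r); [|lra]. apply Hleast. intros r0 Hr0.
    destruct (Rle_or_lt r0 r); auto. exfalso. eauto.
Qed.

(* Each edge of [VR_<(P_n; r_n)] is already an edge of [VR_<(P_n; r')] for some [r' < r_n]. *)
Lemma vr_cyclic_upto_rn n rn r : is_lub (rn_set n) rn -> 0 < r -> r <= rn -> vr_cyclic n r.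
Proof.
  intros Hlub Hr Hrn. destruct (Rle_lt_or_eq_dec _ _ Hrn) as [L|E]; [eapply vr_cyclic_below_rn; eauto|].
  subst r.
  intros a b c He Hc Hd. pose proof He as [Ha [Hb [Hab [Hdist Hdir]]]].
  set (r' := (edist (pt n a) (pt n b) + rn) / 2).
  assert (Hpos : 0 <= edist (pt n a) (pt n b)) by apply sqrt_pos.
  assert (Hedge : forall r'' x y, inP x -> inP y -> x <> y -> edist (pt n x) (pt n y) < r'' ->
    dP x y <= dP y x -> vr_edge n r'' x y) by (unfold vr_edge; tauto).
  assert (He' : vr_edge n r' a b) by (apply Hedge; auto; unfold r'; lra).
  destruct (vr_cyclic_below_rn n rn r' Hlub ltac:(unfold r'; lra) ltac:(unfold r'; lra) a b c He' Hc Hd)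
    as [[E1 [E2 [E3 [E4 E5]]]] [F1 [F2 [F3 [F4 F5]]]]].
  split; apply Hedge; auto; unfold r' in *; lra.
Qed.

Lemma is_g_first_hit n r a c : is_g n r a c -> exists s, first_hit n r a s /\ c = frac (a + s).
Proof. intros [Ha [Hc [s [Hs [Ec [Ed Hf]]]]]]. exists s. repeat split; auto; lra. Qed.

Lemma first_hit_lt_of_lt n r1 r2 a s1 s2 : (3 <= n)%nat -> 0 < r1 -> r1 < r2 ->
  first_hit n r1 a s1 -> first_hit n r2 a s2 -> s1 < s2.
Proof.
  intros Hn Hr1 Hr12 H1 H2. pose proof H1 as [_ [E1 _]]. pose proof H2 as [_ [E2 _]].
  destruct (Rtotal_order s1 s2) as [L|[L|L]]; auto; exfalso.
  - subst. lra.
  - assert (chord n a (a + s2) < r1); [|lra].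
    apply (chord_lt_before_first_hit n Hn r1 Hr1 a s1); auto. split; [apply H2 | lra].
Qed.

(* Near [r_n] the first-hit steps increase with [r]; their supremum is the first-hit step
   for [r_n] itself, and [g_lim] lands on the corresponding point by continuity. *)
Section LimitHit.
Variable n : nat.
Hypothesis n_ge3 : (3 <= n)%nat.
Variables rn d a ss : R.
Hypothesis d_pos : 0 < d.
Hypothesis d_le_rn : d <= rn.
Hypothesis hits_near : forall r, rn - d < r < rn -> exists s, first_hit n r a s.
Hypothesis ss_lub : is_lub (fun s => exists r, rn - d < r < rn /\ first_hit n r a s) ss.

Lemma first_hit_near_sup eta del : 0 < eta -> 0 < del -> exists r s,
  rn - Rmin del d < r < rn /\ first_hit n r a s /\ ss - eta < s <= ss.
Proof.
  intros Heta Hdel. destruct ss_lub as [Hub Hleast].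
  assert (Hm : 0 < Rmin del d <= d) by (split; [apply Rmin_pos | apply Rmin_r]; lra).
  destruct (classic (exists r2 s2, rn - d < r2 < rn /\ first_hit n r2 a s2 /\ ss - eta < s2))
    as [[r2 [s2 [Hr2 [Hs2 Hlt]]]]|Hno].
  - set (r3 := Rmax r2 (rn - Rmin del d / 2)).
    assert (Hr3 : rn - Rmin del d < r3 < rn).
    { unfold r3. split; [eapply Rlt_le_trans; [|apply Rmax_r]; lra | apply Rmax_lub_lt; lra]. }
    destruct (hits_near r3 ltac:(lra)) as [s3 Hs3]. exists r3, s3.
    split; [exact Hr3|]. split; [exact Hs3|]. split.
    + assert (s2 <= s3); [|lra].
      destruct (Rle_lt_or_eq_dec r2 r3 (Rmax_l _ _)) as [L|<-].
      * apply Rlt_le, (first_hit_lt_of_lt n r2 r3 a); auto; lra.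
      * right. apply (first_hit_unique n r2 a); auto.
    + apply Hub. exists r3. split; auto. lra.
  - exfalso. assert (ss <= ss - eta); [|lra]. apply Hleast. intros s [r [Hr Hs]].
    destruct (Rle_or_lt s (ss - eta)); auto. exfalso. apply Hno. exists r, s. auto.
Qed.

Lemma chord_lt_before_sup s : 0 < s < ss -> chord n a (a + s) < rn.
Proof.
  intros Hs. destruct (first_hit_near_sup (ss - s) 1) as [r3 [s3 [Hr3 [Hs3 Hb3]]]]; try lra.
  pose proof (Rmin_r 1 d).
  assert (chord n a (a + s) < r3) by (apply (chord_lt_before_first_hit n n_ge3 r3 ltac:(lra) a s3); auto; lra).
  lra.
Qed.

Lemma sup_pos : 0 < ss.
Proof.
  destruct (hits_near (rn - d / 2)) as [s Hs]; [lra|].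
  pose proof Hs as [Hs0 _].
  assert (s <= ss) by (apply ss_lub; exists (rn - d / 2); split; auto; lra). lra.
Qed.

Lemma chord_at_sup : chord n a (a + ss) = rn.
Proof.
  pose proof sup_pos.
  assert (Hcont := continuity_chord_from n ltac:(lia) a a ss).
  destruct (Rtotal_order (chord n a (a + ss)) rn) as [L|[L|L]]; auto; exfalso.
  - set (rm := (chord n a (a + ss) + rn) / 2).
    destruct (continuity_pt_eps _ _ Hcont (rm - chord n a (a + ss))) as [eta [Heta Hc]]; [unfold rm; lra|].
    destruct (first_hit_near_sup eta (rn - rm)) as [r3 [s3 [Hr3 [[_ [Hv _]] Hb3]]]]; [lra | unfold rm; lra|].
    pose proof (Rmin_l (rn - rm) d).
    assert (Hd : Rabs (chord n a (a + s3) - chord n a (a + ss)) < rm - chord n a (a + ss))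
      by (apply Hc; rewrite Rabs_left1; lra).
    rewrite Hv in Hd. apply Rabs_def2 in Hd. lra.
  - destruct (continuity_pt_eps _ _ Hcont (chord n a (a + ss) - rn)) as [eta [Heta Hc]]; [lra|].
    set (t := ss - Rmin eta ss / 2).
    assert (0 < Rmin eta ss) by (apply Rmin_pos; lra).
    pose proof (Rmin_l eta ss). pose proof (Rmin_r eta ss).
    assert (Hd : Rabs (chord n a (a + t) - chord n a (a + ss)) < chord n a (a + ss) - rn)
      by (apply Hc; unfold t; rewrite Rabs_left1; lra).
    assert (chord n a (a + t) < rn) by (apply chord_lt_before_sup; unfold t; lra).
    apply Rabs_def2 in Hd. lra.
Qed.

Lemma first_hit_sup : first_hit n rn a ss.
Proof.
  pose proof sup_pos. pose proof chord_at_sup.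
  assert (ss <= 1).
  { apply ss_lub. intros s [r [_ [Hs _]]]. lra. }
  assert (ss <> 1).
  { intros E. pose proof chord_at_sup as Hval. rewrite E in Hval.
    replace (a + 1) with (a + IZR 1) in Hval by (simpl; ring).
    rewrite chord_add_IZR_r, chord_diag in Hval by lia. lra. }
  repeat split; try lra.
  intros s' Hs'. pose proof (chord_lt_before_sup s' Hs'). lra.
Qed.

Variable b : R.
Hypothesis glim : g_lim n rn a b.

Lemma coord_eq_at_sup (sel : R * R -> R) : continuity (fun t => sel (pt n t)) ->
  (forall p q, Rabs (sel p - sel q) <= edist p q) -> sel (pt n b) = sel (pt n (a + ss)).
Proof.
  intros Hsel Hle. pose proof sup_pos.
  destruct (Req_dec (sel (pt n b)) (sel (pt n (a + ss)))) as [E|Ne]; auto. exfalso.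
  set (e := Rabs (sel (pt n b) - sel (pt n (a + ss)))).
  assert (He : 0 < e) by (apply Rabs_pos_lt; lra).
  destruct (continuity_pt_eps _ _ (Hsel (a + ss)) (e / 2)) as [eta [Heta Hc]]; [lra|].
  destruct glim as [Ha [_ Hg]]. destruct (Hg (e / 2)) as [del [Hdel Hclose]]; [lra|].
  destruct (first_hit_near_sup eta del) as [r [s [Hr [Hs Hnear]]]]; auto.
  pose proof (Rmin_l del d).
  assert (Hisg : is_g n r a (frac (a + s))).
  { destruct Hs as [Hs1 [Hs2 Hs3]]. split; auto. split; [apply frac_bounds|]. exists s. auto. }
  pose proof (proj2 (Hclose r ltac:(lra)) _ Hisg) as Hb.
  rewrite pt_frac in Hb by lia.
  pose proof (Hle (pt n (a + s)) (pt n b)).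
  assert (Rabs (sel (pt n (a + s)) - sel (pt n (a + ss))) < e / 2) by (apply Hc; rewrite Rabs_left1; lra).
  assert (e <= Rabs (sel (pt n (a + s)) - sel (pt n b)) + Rabs (sel (pt n (a + s)) - sel (pt n (a + ss)))).
  { unfold e. replace (sel (pt n b) - sel (pt n (a + ss))) with
      (- (sel (pt n (a + s)) - sel (pt n b)) + (sel (pt n (a + s)) - sel (pt n (a + ss)))) by ring.
    eapply Rle_trans; [apply Rabs_triang|]. rewrite Rabs_Ropp. lra. }
  lra.
Qed.

Lemma pt_eq_at_sup : pt n b = pt n (a + ss).
Proof.
  assert (Ex := coord_eq_at_sup fst (continuity_pt_x n ltac:(lia))
                  (fun p q => proj1 (Rabs_coord_le_edist p q))).
  assert (Ey := coord_eq_at_sup snd (continuity_pt_y n ltac:(lia))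
                  (fun p q => proj2 (Rabs_coord_le_edist p q))).
  destruct (pt n b), (pt n (a + ss)). simpl in *. subst. auto.
Qed.

End LimitHit.

Lemma g_lim_is_g n rn a b : (3 <= n)%nat -> 0 < rn -> g_lim n rn a b -> is_g n rn a b.
Proof.
  intros Hn Hrn Hg. pose proof Hg as [Ha [Hb Hclose]].
  destruct (Hclose 1) as [d0 [Hd0 Hex]]; [lra|].
  set (d := Rmin d0 rn).
  assert (Hd : 0 < d <= rn) by (split; [apply Rmin_pos | apply Rmin_r]; lra).
  assert (Hd0' : d <= d0) by apply Rmin_l.
  assert (Hits : forall r, rn - d < r < rn -> exists s, first_hit n r a s).
  { intros r Hr. destruct (proj1 (Hex r ltac:(lra))) as [c Hc].
    destruct (is_g_first_hit n r a c Hc) as [s [Hs _]]. eauto. }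
  destruct (completeness (fun s => exists r, rn - d < r < rn /\ first_hit n r a s)) as [ss Hss].
  - exists 1. intros s [r [_ [Hs _]]]. lra.
  - destruct (Hits (rn - d / 2)) as [s Hs]; [lra|]. exists s, (rn - d / 2). split; auto. lra.
  - pose proof (first_hit_sup n Hn rn d a ss ltac:(lra) ltac:(lra) Hits Hss) as Hhit.
    pose proof (pt_eq_at_sup n Hn rn d a ss ltac:(lra) ltac:(lra) Hits Hss b Hg) as Hpt.
    assert (Eb : b = frac (a + ss)).
    { apply (pt_inj n Hn); [exact Hb | apply frac_bounds | rewrite pt_frac by lia; exact Hpt]. }
    destruct Hhit as [H1 [H2 H3]]. split; auto. split; auto. exists ss. auto.
Qed.

Lemma g_step_first_hit n rn r a b : (3 <= n)%nat -> 0 < r -> g_step n rn r a b ->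
  exists s, first_hit n r a s /\ b = frac (a + s).
Proof.
  intros Hn Hr [[_ Hg]|[-> Hg]]; apply is_g_first_hit; auto.
  apply g_lim_is_g; auto.
Qed.

(** * Lifted stars *)

Lemma dP_frac_add a s : inP a -> 0 <= s < 1 -> dP a (frac (a + s)) = s.
Proof.
  intros Ha Hs. unfold dP. rewrite <- (frac_id a) at 2 by exact Ha.
  rewrite frac_sub_frac. replace (a + s - a) with s by ring. apply frac_id, Hs.
Qed.

Lemma Nat_gcd_double_succ_l l : Nat.gcd (2 * l + 1) l = 1%nat.
Proof.
  apply Nat.divide_1_r.
  assert (D : Nat.divide (Nat.gcd (2 * l + 1) l) (2 * l)) by (apply Nat.divide_mul_r, Nat.gcd_divide_r).
  pose proof (Nat.divide_sub_r _ _ _ (Nat.gcd_divide_l (2 * l + 1) l) D) as D'.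
  replace (2 * l + 1 - 2 * l)%nat with 1%nat in D' by lia. exact D'.
Qed.

Lemma divide_of_mul_gcd_quotient n l g q n1 m c :
  Nat.gcd n (2 * l + 1) = g -> (2 * l + 1 = q * g)%nat -> n = (n1 * g)%nat ->
  (q * c = m * l * n1)%nat -> Nat.divide q m.
Proof.
  intros Eg EM En E.
  assert (Hg : (1 <= g)%nat) by (destruct g; [rewrite Nat.mul_0_r in EM; lia | lia]).
  assert (G1 : Nat.gcd n1 q = 1%nat).
  { rewrite EM, En, Nat.gcd_mul_mono_r in Eg. destruct (Nat.gcd n1 q) as [|[|d]]; nia. }
  assert (G2 : Nat.gcd q l = 1%nat).
  { apply Nat.divide_1_r. rewrite <- (Nat_gcd_double_succ_l l).
    apply Nat.gcd_greatest; [apply (Nat.divide_trans _ q); [apply Nat.gcd_divide_l | exists g; lia] |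
                             apply Nat.gcd_divide_r]. }
  assert (D : Nat.divide q (l * (n1 * m))) by (exists c; lia).
  apply Nat.gauss in D; auto. apply Nat.gauss in D; auto. rewrite Nat.gcd_comm. auto.
Qed.

Lemma num_special_none n l u :
  (forall i, (i < 2 * l + 1)%nat -> ~ is_special n (pt n (u i))) -> num_special n l u 0.
Proof.
  intros Hno. exists nil. split; [constructor | split; [auto|]].
  intros p. split; [intros []|]. intros [[i [Hi ->]] Hs]. exact (Hno i Hi Hs).
Qed.

Lemma num_special_residue_class n l u g q i0 :
  (2 * l + 1 = q * g)%nat -> (i0 < q)%nat ->
  (forall i j, (i < j < 2 * l + 1)%nat -> pt n (u i) <> pt n (u j)) ->
  (forall i, (i < 2 * l + 1)%nat -> is_special n (pt n (u i)) <-> i mod q = i0) ->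
  num_special n l u g.
Proof.
  intros EM Hi0 Hinj Hspec.
  assert (Hidx : forall k, (k < g)%nat -> (i0 + k * q < 2 * l + 1)%nat) by nia.
  exists (map (fun k => pt n (u (i0 + k * q)%nat)) (seq 0 g)). split; [|split].
  - apply NoDup_map_NoDup_ForallPairs; [|apply seq_NoDup].
    intros x y Hx Hy Exy. apply in_seq in Hx, Hy.
    destruct (lt_eq_lt_dec x y) as [[L|L]|L]; auto; exfalso.
    + apply (Hinj (i0 + x * q) (i0 + y * q))%nat; auto. split; [nia | apply Hidx; lia].
    + apply (Hinj (i0 + y * q) (i0 + x * q))%nat; auto. split; [nia | apply Hidx; lia].
  - rewrite length_map, length_seq. auto.
  - intros p. rewrite in_map_iff. split.
    + intros [k [<- Hk]]. apply in_seq in Hk.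
      split; [exists (i0 + k * q)%nat; split; [apply Hidx; lia | auto]|].
      apply Hspec; [apply Hidx; lia|]. rewrite Nat.Div0.mod_add, Nat.mod_small; auto.
    + intros [[i [Hi ->]] Hs]. apply Hspec in Hs; auto.
      pose proof (Nat.div_mod_eq i q) as Ei.
      exists (i / q)%nat. split.
      * do 2 f_equal. lia.
      * apply in_seq. split; [lia|]. simpl. apply Nat.Div0.div_lt_upper_bound. lia.
Qed.

Section Star.
Variables (n l : nat) (r : R) (u : nat -> R).
Local Notation M := (2 * l + 1)%nat.
Hypothesis l_pos : (1 <= l)%nat.
Hypothesis n_ge3 : (3 <= n)%nat.
Hypothesis r_pos : 0 < r.
Hypothesis cyclic : vr_cyclic n r.
Hypothesis u_in : forall i, (i < M)%nat -> inP (u i).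
Hypothesis u_step : forall i, (i < M)%nat ->
  exists s, first_hit n r (u i) s /\ u ((i + 1) mod M) = frac (u i + s).
Hypothesis u_sum : sum_f_R0 (fun i => dP (u i) (u ((i + 1) mod M))) (2 * l) = INR l.

Let INR_n_pos : 0 < INR n.
Proof. apply lt_0_INR. lia. Qed.

Definition star_gap (k : nat) : R := dP (u (k mod M)) (u ((k + 1) mod M)).

Fixpoint star_lift (k : nat) : R :=
  match k with O => u O | S k => star_lift k + star_gap k end.

Local Notation U := star_lift.

Lemma star_gap_first_hit k :
  first_hit n r (u (k mod M)) (star_gap k) /\ u ((k + 1) mod M) = frac (u (k mod M) + star_gap k).
Proof.
  assert (Hk : (k mod M < M)%nat) by (apply Nat.mod_upper_bound; lia).
  destruct (u_step _ Hk) as [s [Hs Es]].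
  rewrite Nat.Div0.add_mod_idemp_l in Es.
  unfold star_gap. rewrite Es, dP_frac_add by (apply u_in in Hk; auto; destruct Hs; lra).
  auto.
Qed.

Lemma star_lift_mod k : exists z, U k = u (k mod M) + IZR z.
Proof.
  induction k as [|k [z IH]].
  - exists 0%Z. simpl. rewrite Nat.Div0.mod_0_l. ring.
  - destruct (star_gap_first_hit k) as [_ E].
    exists (z + floorR (u (k mod M) + star_gap k))%Z.
    change (U (S k)) with (U k + star_gap k).
    replace (S k) with (k + 1)%nat by lia. rewrite IH, E, plus_IZR. unfold frac. ring.
Qed.

Lemma star_lift_hit_orbit : hit_orbit n r U.
Proof.
  intros k. simpl. replace (U k + star_gap k - U k) with (star_gap k) by ring.
  destruct (star_lift_mod k) as [z ->]. apply first_hit_add_IZR; auto. apply star_gap_first_hit.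
Qed.

Lemma star_lift_add_period k : U (k + M) = U k + INR l.
Proof.
  induction k as [|k IH].
  - assert (E : forall k, U (S k) = u O + sum_f_R0 star_gap k).
    { induction k as [|k IHk]; [simpl; ring|].
      change (U (S (S k))) with (U (S k) + star_gap (S k)). rewrite IHk. simpl. ring. }
    replace (0 + M)%nat with (S (2 * l)) by lia. rewrite E. simpl (U 0).
    rewrite <- u_sum. f_equal. apply sum_eq. intros i Hi.
    unfold star_gap. rewrite Nat.mod_small by lia. auto.
  - replace (S k + M)%nat with (S (k + M)) by lia.
    change (U (k + M) + star_gap (k + M) = U k + star_gap k + INR l). rewrite IH.
    unfold star_gap. replace (k + M + 1)%nat with (k + 1 + 1 * M)%nat by lia.
    replace (k + M)%nat with (k + 1 * M)%nat by lia. rewrite !Nat.Div0.mod_add. ring.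
Qed.

Lemma star_lift_add_periods k t : U (k + t * M) = U k + INR t * INR l.
Proof.
  induction t as [|t IH].
  - simpl. rewrite Nat.add_0_r. ring.
  - replace (k + S t * M)%nat with ((k + t * M) + M)%nat by lia.
    rewrite star_lift_add_period, IH, S_INR. ring.
Qed.

Lemma star_lift_translate i m c : U (i + m) = U i + IZR c / INR n ->
  forall t, U (i + t + m) = U (i + t) + IZR c / INR n.
Proof.
  intros E t.
  assert (O1 := hit_orbit_add_IZR_div n n_ge3 r _ c (hit_orbit_tail n r U i star_lift_hit_orbit)).
  assert (O2 := hit_orbit_tail n r U (i + m) star_lift_hit_orbit).
  replace (i + t + m)%nat with (i + m + t)%nat by lia.
  symmetry. apply (hit_orbit_unique n r _ _ O1 O2). simpl. rewrite !Nat.add_0_r. auto.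
Qed.

(* Iterating the translation [M] times and comparing with the period [U (k + M) = U k + l]. *)
Lemma star_lift_translation_count i m c :
  (forall t, U (i + t + m) = U (i + t) + IZR c / INR n) ->
  (Z.of_nat M * c = Z.of_nat m * Z.of_nat l * Z.of_nat n)%Z.
Proof.
  intros E.
  assert (Iter : forall t, U (i + t * m) = U i + INR t * (IZR c / INR n)).
  { induction t as [|t IH]; [simpl; rewrite Nat.add_0_r; ring|].
    replace (i + S t * m)%nat with (i + t * m + m)%nat by lia. rewrite E, IH, S_INR. ring. }
  pose proof (Iter M) as A. pose proof (star_lift_add_periods i m) as B.
  replace (M * m)%nat with (m * M)%nat in A by lia. rewrite A in B.
  apply eq_IZR. rewrite !mult_IZR, <- !INR_IZR_INZ.
  apply (Rmult_eq_reg_r (/ INR n)); [|apply Rinv_neq_0_compat; lra].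
  replace (INR M * IZR c * / INR n) with (INR M * (IZR c / INR n)) by (unfold Rdiv; ring).
  replace (INR m * INR l * INR n * / INR n) with (INR m * INR l) by (field; lra).
  lra.
Qed.

Definition special_lift (k : nat) : Prop := exists z, 2 * INR n * U k = IZR z.

Lemma special_lift_iff k : special_lift k <-> is_special n (pt n (u (k mod M))).
Proof.
  assert (Hk : (k mod M < M)%nat) by (apply Nat.mod_upper_bound; lia).
  rewrite is_special_pt by auto.
  destruct (star_lift_mod k) as [w Hw]. unfold special_lift. rewrite Hw. split.
  - intros [z Hz]. exists (z - 2 * Z.of_nat n * w)%Z.
    rewrite minus_IZR, !mult_IZR, <- INR_IZR_INZ, <- Hz. ring.
  - intros [z Hz]. exists (z + 2 * Z.of_nat n * w)%Z.
    rewrite plus_IZR, !mult_IZR, <- INR_IZR_INZ, <- Hz. ring.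
Qed.

(* Reflection in the special point [U i], a multiple of [1 / (2n)], maps the polygon to itself
   and reverses the orbit; periodicity keeps the reversed indices nonnegative. *)
Lemma star_lift_reflect i : special_lift i ->
  forall k, U (i + k) + U (i + M * (k + 1) - k) = 2 * U i + INR (k + 1) * INR l.
Proof.
  intros [z Hz].
  set (W := fun k => 2 * U i + INR (k + 1) * INR l - U (i + M * (k + 1) - k)).
  assert (OW : hit_orbit n r W).
  { intros k. unfold W.
    set (A := (i + M * (S k + 1) - S k)%nat).
    assert (EA : (i + M * (k + 1) - k + M)%nat = S A).
    { unfold A. assert (F1 : (M * (S k + 1) = M * (k + 1) + M)%nat) by ring.
      assert (F2 : (k + 1 <= M * (k + 1))%nat) by (apply Nat.le_mul_l; lia). lia. }
    assert (EU : U (i + M * (k + 1) - k) = U (S A) - INR l)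
      by (rewrite <- EA, star_lift_add_period; ring).
    rewrite EU. change (U (S A)) with (U A + star_gap A).
    pose proof (first_hit_reflect n n_ge3 r r_pos cyclic (U A) (star_gap A)
                  (z + Z.of_nat (k + 2) * Z.of_nat l * Z.of_nat n)%Z) as HR.
    replace (IZR (z + Z.of_nat (k + 2) * Z.of_nat l * Z.of_nat n) / INR n)
      with (2 * U i + INR (k + 2) * INR l) in HR
      by (rewrite plus_IZR, !mult_IZR, <- !INR_IZR_INZ, <- Hz; field; lra).
    replace (S k + 1)%nat with (k + 2)%nat by lia. fold A.
    replace (2 * U i + INR (k + 1) * INR l - (U A + star_gap A - INR l))
      with (2 * U i + INR (k + 2) * INR l - U A - star_gap A) by (rewrite !plus_INR; simpl; ring).
    replace (2 * U i + INR (k + 2) * INR l - U A -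
      (2 * U i + INR (k + 2) * INR l - U A - star_gap A)) with (star_gap A) by ring.
    apply HR. replace (star_gap A) with (U (S A) - U A) by (simpl; ring).
    apply star_lift_hit_orbit. }
  assert (W0 : W O = U i).
  { unfold W. replace (i + M * (0 + 1) - 0)%nat with (i + M)%nat by lia.
    rewrite star_lift_add_period. replace (INR (0 + 1)) with 1 by (simpl; ring). ring. }
  intros k. rewrite (hit_orbit_unique n r _ _ (hit_orbit_tail n r U i star_lift_hit_orbit) OW).
  - unfold W. ring.
  - simpl. rewrite Nat.add_0_r. auto.
Qed.

Lemma star_lift_double_gap i j : special_lift i -> special_lift j -> (i <= j)%nat ->
  forall t, U (i + t + 2 * (j - i)) = U (i + t) + 2 * (U j - U i).
Proof.
  intros Si Sj Hij t.
  set (m := (j - i)%nat).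
  set (P := (M * (m + t + 1))%nat).
  assert (HP : (3 * (m + t + 1) <= P)%nat) by (unfold P; apply Nat.mul_le_mono_r; lia).
  set (K := (P - t)%nat).
  set (e := (K - m - t)%nat).
  pose proof (star_lift_reflect j Sj (m + t)) as R1.
  replace (j + (m + t))%nat with (i + t + 2 * m)%nat in R1 by (unfold m; lia).
  replace (j + M * (m + t + 1) - (m + t))%nat with (i + K)%nat in R1 by (unfold K, m; fold P; lia).
  pose proof (star_lift_reflect i Si K) as R2.
  replace (i + M * (K + 1) - K)%nat with (i + t + e * M)%nat in R2.
  - rewrite star_lift_add_periods in R2.
    replace (INR (K + 1)) with (INR (m + t + 1) + INR e) in R2 by (rewrite <- plus_INR; f_equal; unfold e; lia).
    lra.
  - assert (F1 : (e * M = K * M - (m + t) * M)%nat)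
      by (unfold e; rewrite <- Nat.mul_sub_distr_r; f_equal; lia).
    assert (F2 : ((m + t) * M + M = P)%nat) by (unfold P; ring).
    assert (F3 : ((m + t) * M <= K * M)%nat) by (apply Nat.mul_le_mono_r; unfold K; lia).
    assert (F4 : (M * (K + 1) = K * M + M)%nat) by ring.
    unfold K in *. lia.
Qed.

Lemma nondecreasing_return (z : nat -> R) g : (1 <= g)%nat -> (forall j, z j <= z (S j)) ->
  z g = z O -> z 1%nat = z O.
Proof.
  intros Hg Hz Eg.
  assert (Hle : forall j, z 1%nat <= z (S j)).
  { induction j as [|j IH]; [lra|]. pose proof (Hz (S j)). lra. }
  pose proof (Hle (g - 1)%nat) as L. replace (S (g - 1)) with g in L by lia.
  pose proof (Hz O). lra.
Qed.

Section Quotient.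
Variables g q n1 : nat.
Hypothesis M_eq : M = (q * g)%nat.
Hypothesis n_eq : n = (n1 * g)%nat.

(* Rotation-number argument: the orbits started at [U (i + j * q) - j * n1 * l / n] are ordered
   like their starting points, so these starting points are monotone in [j]; they return to
   their initial value at [j = g], hence they are constant. *)
Lemma star_lift_add_quotient i : U (i + q) = U i + INR (n1 * l) / INR n.
Proof.
  assert (Hg : (1 <= g)%nat) by (destruct g; lia).
  set (p := (n1 * l)%nat).
  set (V := fun j k => U (i + j * q + k) + IZR (- Z.of_nat (j * p)) / INR n).
  assert (OV : forall j, hit_orbit n r (V j)).
  { intros j. exact (hit_orbit_add_IZR_div n n_ge3 r _ _ (hit_orbit_tail n r U _ star_lift_hit_orbit)). }
  assert (Vq : forall j, V j q = V (S j) O + INR p / INR n).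
  { intros j. unfold V. rewrite !opp_IZR, <- !INR_IZR_INZ.
    replace (i + j * q + q)%nat with (i + S j * q + 0)%nat by lia.
    replace (S j * p)%nat with (j * p + p)%nat by lia. rewrite plus_INR. field. lra. }
  assert (Step : forall j, V j O <= V (S j) O -> V (S j) O <= V (S (S j)) O).
  { intros j L. pose proof (hit_orbit_le n n_ge3 r r_pos cyclic _ _ (OV j) (OV (S j)) L q).
    rewrite !Vq in H. lra. }
  assert (Back : V g O = V O O).
  { unfold V. rewrite !opp_IZR, <- !INR_IZR_INZ, !Nat.add_0_r. simpl.
    replace (g * q)%nat with M by lia. rewrite star_lift_add_period.
    replace (g * p)%nat with (l * n)%nat by (unfold p; rewrite n_eq; ring).
    rewrite mult_INR. unfold Rdiv. rewrite Ropp_0, Rmult_0_l, Rplus_0_r. field. lra. }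
  assert (E : V 1%nat O = V O O).
  { destruct (Rle_or_lt (V O O) (V 1%nat O)) as [L|L].
    - apply (nondecreasing_return (fun j => V j O) g Hg); auto.
      induction j as [|j IH]; auto.
    - assert (Step' : forall j, V (S j) O <= V j O -> V (S (S j)) O <= V (S j) O).
      { intros j L'. pose proof (hit_orbit_le n n_ge3 r r_pos cyclic _ _ (OV (S j)) (OV j) L' q).
        rewrite !Vq in H. lra. }
      assert (N := nondecreasing_return (fun j => - V j O) g Hg).
      simpl in N. rewrite Back in N. enough (- V 1%nat O = - V O O) by lra. apply N; auto.
      induction j as [|j IH]; [lra|]. apply Ropp_le_contravar, Step'. lra. }
  unfold V in E. rewrite !opp_IZR, <- !INR_IZR_INZ, !Nat.add_0_r in E. simpl in E.
  replace (q + 0)%nat with q in E by lia. replace (p + 0)%nat with p in E by lia.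
  unfold Rdiv in *. rewrite Ropp_0, Rmult_0_l, Rplus_0_r in E. lra.
Qed.

Lemma special_lift_add_quotient k : special_lift (k + q) <-> special_lift k.
Proof.
  unfold special_lift. rewrite star_lift_add_quotient.
  split; intros [z Hz].
  - exists (z - 2 * Z.of_nat (n1 * l))%Z. rewrite minus_IZR, mult_IZR, <- INR_IZR_INZ, <- Hz.
    field. lra.
  - exists (z + 2 * Z.of_nat (n1 * l))%Z. rewrite plus_IZR, mult_IZR, <- INR_IZR_INZ, <- Hz.
    field. lra.
Qed.

Lemma special_lift_add_quotients k t : special_lift (k + t * q) <-> special_lift k.
Proof.
  induction t as [|t IH]; [rewrite Nat.add_0_r; tauto|].
  replace (k + S t * q)%nat with (k + t * q + q)%nat by lia. rewrite special_lift_add_quotient. auto.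
Qed.

Hypothesis g_eq : Nat.gcd n M = g.

(* [U j - U i = c / (2n)]; for even [c] this is a translation of the orbit, for odd [c] its
   double is one, and then [(2l+1) c = 2 (j - i) l n] fails by parity. *)
Lemma special_lift_gap_divide i j : special_lift i -> special_lift j -> (i <= j)%nat ->
  Nat.divide q (j - i).
Proof.
  intros Si Sj Hij. pose proof Si as [zi Hzi]. pose proof Sj as [zj Hzj].
  destruct (Z.Even_or_Odd (zj - zi)) as [[c Hc]|[c Hc]].
  - assert (E : U (i + (j - i)) = U i + IZR c / INR n).
    { replace (i + (j - i))%nat with j by lia.
      apply (Rmult_eq_reg_l (2 * INR n)); [|lra].
      replace (2 * INR n * (U i + IZR c / INR n)) with (2 * INR n * U i + IZR (2 * c))
        by (rewrite mult_IZR; field; lra).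
      rewrite Hzi, Hzj, <- plus_IZR, <- Hc. f_equal. ring. }
    pose proof (star_lift_translation_count _ _ _ (star_lift_translate _ _ _ E)) as T.
    assert (Hc0 : (0 <= c)%Z) by nia.
    rewrite <- (Z2Nat.id c), <- !Nat2Z.inj_mul in T by lia. apply Nat2Z.inj in T.
    apply (divide_of_mul_gcd_quotient n l g q n1 (j - i) (Z.to_nat c)); auto.
    rewrite M_eq, n_eq in T. apply (Nat.mul_cancel_r _ _ g); [lia|].
    replace (q * Z.to_nat c * g)%nat with (q * g * Z.to_nat c)%nat by ring. rewrite T. ring.
  - exfalso.
    assert (E : forall t, U (i + t + 2 * (j - i)) = U (i + t) + IZR (zj - zi) / INR n).
    { intros t. rewrite (star_lift_double_gap i j Si Sj Hij).
      f_equal. rewrite minus_IZR, <- Hzi, <- Hzj. field. lra. }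
    pose proof (star_lift_translation_count _ _ _ E) as T. rewrite Hc in T.
    lia.
Qed.

Lemma special_lift_iff_mod i j : special_lift i -> (special_lift j <-> i mod q = j mod q).
Proof.
  intros Si. assert (Hq : (q <> 0)%nat) by (intros ->; lia).
  split.
  - intros Sj. destruct (le_lt_dec i j) as [L|L].
    + destruct (special_lift_gap_divide i j Si Sj L) as [t Ht].
      replace j with (i + t * q)%nat by lia. rewrite Nat.Div0.mod_add. auto.
    + destruct (special_lift_gap_divide j i Sj Si ltac:(lia)) as [t Ht].
      replace i with (j + t * q)%nat by lia. rewrite Nat.Div0.mod_add. auto.
  - intros E.
    assert (Ei : i = (i mod q + i / q * q)%nat) by (pose proof (Nat.div_mod_eq i q); lia).
    assert (Ej : j = (j mod q + j / q * q)%nat) by (pose proof (Nat.div_mod_eq j q); lia).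
    rewrite Ei, special_lift_add_quotients in Si.
    rewrite Ej, special_lift_add_quotients, <- E. exact Si.
Qed.

End Quotient.

Lemma star_pt_inj i j : (i < j < M)%nat -> pt n (u i) <> pt n (u j).
Proof.
  intros Hij Epts. apply (pt_inj n n_ge3) in Epts; [|apply u_in; lia | apply u_in; lia].
  destruct (star_lift_mod i) as [zi Hzi]. destruct (star_lift_mod j) as [zj Hzj].
  rewrite Nat.mod_small in Hzi, Hzj by lia.
  assert (E : U (i + (j - i)) = U i + IZR ((zj - zi) * Z.of_nat n) / INR n).
  { replace (i + (j - i))%nat with j by lia. rewrite mult_IZR, minus_IZR, <- INR_IZR_INZ.
    rewrite Hzi, Hzj, Epts. field. lra. }
  pose proof (star_lift_translation_count _ _ _ (star_lift_translate _ _ _ E)) as T.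
  assert (T' : (Z.of_nat M * (zj - zi) = Z.of_nat (j - i) * Z.of_nat l)%Z)
    by (apply (Z.mul_cancel_r _ _ (Z.of_nat n)); lia).
  assert (Hz : (0 <= zj - zi)%Z) by nia.
  rewrite <- (Z2Nat.id (zj - zi)), <- !Nat2Z.inj_mul in T' by lia. apply Nat2Z.inj in T'.
  assert (D : Nat.divide M (l * (j - i))) by (exists (Z.to_nat (zj - zi)); lia).
  apply Nat.gauss in D; [|apply Nat_gcd_double_succ_l].
  destruct D as [w Hw]. destruct w; lia.
Qed.

Lemma star_num_special : num_special n l u 0 \/ num_special n l u (Nat.gcd n M).
Proof.
  set (g := Nat.gcd n M).
  destruct (Nat.gcd_divide_l n M) as [n1 En]. destruct (Nat.gcd_divide_r n M) as [q EM].
  fold g in En, EM.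
  assert (Hspec : forall i, (i < M)%nat -> is_special n (pt n (u i)) <-> special_lift i).
  { intros i Hi. rewrite special_lift_iff, Nat.mod_small by exact Hi. tauto. }
  destruct (classic (exists i0, (i0 < M)%nat /\ special_lift i0)) as [[i0 [Hi0 S0]]|Hno].
  - right. apply (num_special_residue_class n l u g q (i0 mod q)); auto.
    + apply Nat.mod_upper_bound. intros ->. lia.
    + exact star_pt_inj.
    + intros i Hi. rewrite Hspec, (special_lift_iff_mod g q n1 EM En eq_refl i0 i S0) by exact Hi.
      split; auto.
  - left. apply num_special_none. intros i Hi Hs. apply Hno. exists i. rewrite <- Hspec; auto.
Qed.

End Star.

Theorem lemma5p13 (n l : nat) (rn r : R) (u : nat -> R) :
  (1 <= l)%nat -> (4 * l + 2 <= n)%nat ->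
  is_lub (rn_set n) rn ->
  is_star n rn l r u ->
  num_special n l u 0 \/ num_special n l u (Nat.gcd n (2 * l + 1)).
Proof.
  intros Hl Hn Hlub [[Hr Hrn] [Hin [Hstep Hsum]]].
  assert (Hn3 : (3 <= n)%nat) by lia.
  apply (star_num_special n l r u); auto.
  - exact (vr_cyclic_upto_rn n rn r Hlub Hr Hrn).
  - intros i Hi. exact (g_step_first_hit n rn r _ _ Hn3 Hr (Hstep i Hi)).
Qed.
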